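(* For $n\in\{0,1,2,\dots\}$ let \[ d_n=\frac{(-1)^n}{n!}\sum_{k=0}^{n}(-1)^kS(n,k)(2k-3)!!. \] Then $d_n\ge0$ for every $n\in\mathbb{N}=\{1,2,\dots\}$.
   Context: $S(n,k)$ are the Stirling numbers of the second kind, given by $\frac{(e^x-1)^k}{k!}=\sum_{n\ge k}S(n,k)\frac{x^n}{n!}$. Double factorials: $(2j-1)!!=1\cdot3\cdots(2j-1)$ for $j\ge1$, and $[-(2j+1)]!!=(-1)^j/(2j-1)!!$ for $j\ge0$, so $(-1)!!=1$ and $(-3)!!=-1$. *)

From mathcomp Require Import all_boot all_order all_algebra.
Set Implicit Arguments. Unset Strict Implicit. Unset Printing Implicit Defensive.
Import Order.TTheory GRing.Theory Num.Theory.
Local Open Scope ring_scope.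

(* Stirling numbers of the second kind, obtained by extracting the
   coefficient of x^n/n! in (e^x-1)^k/k! = (1/k!) sum_j C(k,j)(-1)^(k-j) e^(jx). *)
Definition stirling2 (n k : nat) : rat :=
  (k`!%:R)^-1 * \sum_(0 <= j < k.+1) (-1) ^+ (k - j) * 'C(k, j)%:R * (j%:R) ^+ n.

(* odf j = 1*3*...*(2j-1) = (2j-1)!! for j >= 1, and 1 (empty product) for j = 0. *)
Definition odf (j : nat) : rat := \prod_(1 <= i < j.+1) ((2 * i)%N%:R - 1).

(* Double factorial of an odd integer m:
   (2j-1)!! = 1*3*...*(2j-1) for j >= 1, and [-(2j+1)]!! = (-1)^j/(2j-1)!! for j >= 0
   (with (-1)!! = 1).  Values at even m are irrelevant. *)
Definition dfact (m : int) : rat :=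
  match m with
  | Posz n => odf (n.+1)./2          (* n = 2j-1, j = (n+1)/2 *)
  | Negz n => (-1) ^+ (n./2) / odf (n./2)  (* m = -(n+1) = -(2j+1), j = n/2 *)
  end.

Definition d (n : nat) : rat :=
  (-1) ^+ n / n`!%:R *
  \sum_(0 <= k < n.+1) (-1) ^+ k * stirling2 n k * dfact (2 * (k%:Z) - 3)%R.

From mathcomp Require Import all_boot all_order all_algebra.
From mathcomp Require Import ring lra zify.
Import Order.TTheory GRing.Theory Num.Theory.
Local Open Scope ring_scope.

(** The numbers (-1)^k (2k-3)!! are the Taylor coefficients of F(t) = -sqrt(1 + 2t), and
    since substituting t = e^x - 1 turns d/dx into (1 + t) d/dt, the sum
    \sum_k S(n,k) (-1)^k (2k-3)!! is the n-th Taylor coefficient a_n of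
    A(x) = F(e^x - 1) = -sqrt(2e^x - 1).  Comparing coefficients in A^2 = 2e^x - 1 and
    A A' = e^x, and putting b_n = (-1)^n a_n (so that d_n = b_n / n!), gives b_1 = 1 and
      b_(m+2) = \sum_(i<m) C(m+1,i+1) b_(i+1) b_(m+1-i)
                + 1/2 \sum_(i<m) C(m+1,i+1) b_(i+1) b_(m-i),
    a recursion with nonnegative coefficients; hence b_n >= 0 for n >= 1. *)

Section AlternatingBinomialSums.

Context {R : comPzRingType}.
Implicit Types g : nat -> R.

Definition alt_binsum k g : R := \sum_(j < k.+1) (-1) ^+ j * 'C(k, j)%:R * g j.

Lemma alt_binsumS k g :
  alt_binsum k.+1 g = alt_binsum k g - alt_binsum k (g \o succn).
Proof.
rewrite /alt_binsum big_ord_recl [in RHS]big_ord_recl /=.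
set s := \sum_(i < k) _.
have -> : s = - \sum_(i < k.+1) (-1) ^+ i * 'C(k, i.+1)%:R * g i.+1.
  rewrite big_ord_recr /= bin_small // mulr0 mul0r addr0 -sumrN.
  by apply: eq_bigr => i _; rewrite exprS mulN1r !mulNr.
rewrite !bin0 -!sumrN -addrA -big_split /=; congr (_ + _).
by apply: eq_bigr => i _; rewrite /bump /= add1n binS natrD exprS; ring.
Qed.

Lemma alt_binsumS_natmul k g :
  alt_binsum k.+1 (fun j => j%:R * g j) = - k.+1%:R * alt_binsum k (g \o succn).
Proof.
rewrite /alt_binsum big_ord_recl /= mul0r mulr0 add0r mulr_sumr.
apply: eq_bigr => i _; rewrite /bump /= add1n exprS.
have bin_diag : 'C(k.+1, i.+1)%:R * i.+1%:R = k.+1%:R * 'C(k, i)%:R :> R.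
  by rewrite -!natrM mulnC -mul_bin_diag.
transitivity (- (-1) ^+ i * ('C(k.+1, i.+1)%:R * i.+1%:R) * g i.+1); first ring.
by rewrite bin_diag; ring.
Qed.

End AlternatingBinomialSums.

Lemma stirling2E n k :
  stirling2 n k = (-1) ^+ k / k`!%:R * alt_binsum k (fun j => j%:R ^+ n).
Proof.
rewrite /stirling2 /alt_binsum big_mkord -mulrA mulrCA.
congr (_ * _); rewrite mulr_sumr.
apply: eq_bigr => j _; have le_jk : (j <= k)%N by rewrite -ltnS.
by rewrite exprB ?unitrN1 // invr_sign !mulrA.
Qed.

Lemma stirling2_00 : stirling2 0 0 = 1.
Proof. by rewrite stirling2E /alt_binsum big_ord1 fact0 bin0 !expr0 divr1 !mul1r. Qed.

Lemma stirling2_S0 n : stirling2 n.+1 0 = 0.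
Proof. by rewrite stirling2E /alt_binsum big_ord1 expr0n /= !mulr0. Qed.

Lemma stirling2SS n k :
  stirling2 n.+1 k.+1 = k.+1%:R * stirling2 n k.+1 + stirling2 n k.
Proof.
rewrite !stirling2E.
have -> : alt_binsum k.+1 (fun j => j%:R ^+ n.+1)
        = alt_binsum k.+1 (fun j => j%:R * j%:R ^+ n) :> rat.
  by apply: eq_bigr => j _; rewrite exprS.
rewrite alt_binsumS_natmul alt_binsumS factS natrM exprS.
have k_fact_neq0 : k`!%:R != 0 :> rat by rewrite pnatr_eq0 -lt0n fact_gt0.
by field; rewrite k_fact_neq0 addrC natr1 pnatr_eq0.
Qed.

Lemma stirling2_small n k : (n < k)%N -> stirling2 n k = 0.
Proof.
elim: n k => [|n IH] [|k] // lt_nk.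
  by rewrite stirling2E alt_binsumS subrr mulr0.
by rewrite stirling2SS !IH // ?mulr0 ?addr0 // ltnW.
Qed.

Section EgfDerivation.

Context {R : comPzRingType}.
Implicit Types (c : R) (u v : nat -> R).

(* If u lists the coefficients of F(t) = \sum_k u k t^k / k!, then der c u lists those
   of (1 + c t) F'(t), and binconv is the product of such generating functions. *)
Definition der c u k : R := c * k%:R * u k + u k.+1.

Definition binconv u v m : R := \sum_(i < m.+1) 'C(m, i)%:R * u i * v (m - i)%N.

Lemma eq_iter_der {c n u v} : u =1 v -> iter n (der c) u =1 iter n (der c) v.
Proof. by move=> eq_uv; elim: n => [|n IH] //= k; rewrite /der !IH. Qed.

Lemma iter_derD c u v n k :
  iter n (der c) (fun i => u i + v i) k = iter n (der c) u k + iter n (der c) v k.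
Proof. by elim: n k => [|n IH] k //=; rewrite /der !IH; ring. Qed.

Lemma iter_der_id c u n : der c u =1 u -> iter n (der c) u =1 u.
Proof. by move=> Du; elim: n => [|n IH] //= k; rewrite -[RHS]Du /der !IH. Qed.

Lemma eq_binconv {u u' v v' : nat -> R} :
  u =1 u' -> v =1 v' -> binconv u v =1 binconv u' v'.
Proof. by move=> eq_u eq_v m; apply: eq_bigr => i _; rewrite eq_u eq_v. Qed.

Lemma binconvC u v : binconv u v =1 binconv v u.
Proof.
move=> m; rewrite /binconv (reindex_inj rev_ord_inj) /=; apply: eq_bigr => i _.
have le_im : (i <= m)%N by rewrite -ltnS.
by rewrite subKn // bin_sub // mulrAC.
Qed.

Lemma binconv_split u v m :
  binconv u v m.+1 = u 0%N * v m.+1 + u m.+1 * v 0%N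
                     + \sum_(i < m) 'C(m.+1, i.+1)%:R * u i.+1 * v (m - i)%N.
Proof.
rewrite /binconv big_ord_recl big_ord_recr /= subnn binn bin0 subn0 !mul1r.
by rewrite addrAC addrA.
Qed.

(* The product rule for d/dt. *)
Lemma binconvS u v m :
  binconv u v m.+1 = binconv (u \o succn) v m + binconv u (v \o succn) m.
Proof.
rewrite /binconv big_ord_recl [X in _ = _ + X]big_ord_recl /= !bin0 subn0.
under eq_bigr => i _ do rewrite /bump /= add1n binS natrD !mulrDl.
rewrite big_split /= [X in _ + (X + _) = _]big_ord_recr /= bin_small // mulr0n !mul0r addr0.
rewrite subn0 addrA addrC; congr (_ + (_ + _)); apply: eq_bigr => i _.
by rewrite /bump /= subSS subnSK.
Qed.

Definition lin_coef (a b : R) (k : nat) : R :=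
  if k is 0 then a else if k is 1 then b else 0.

Lemma der_lin_coef c a b : der c (lin_coef a b) =1 lin_coef b (c * b).
Proof. by case=> [|[|k]]; rewrite /der /= ?mulr0 ?mul0r ?addr0 ?add0r ?mulr1. Qed.

Lemma der_eigen_uniq c e u v :
  (forall k, der c u k = e * u k) -> (forall k, der c v k = e * v k) ->
  u 0%N = v 0%N -> u =1 v.
Proof.
move=> Du Dv uv0; elim=> [|k IH] //.
have succ_der w : w k.+1 = der c w k - c * k%:R * w k by rewrite /der; ring.
by rewrite (succ_der u) (succ_der v) Du Dv IH.
Qed.

Lemma der_binconv c u v m :
  der c (binconv u v) m = binconv (der c u) v m + binconv u (der c v) m.
Proof.
rewrite /der binconvS /binconv mulr_sumr -!big_split /=; apply: eq_bigr => i _.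
have le_im : (i <= m)%N by rewrite -ltnS.
rewrite natrB //; ring.
Qed.

Lemma iter_der_binconv c u v n :
  iter n (der c) (binconv u v) 0%N =
  binconv (fun i => iter i (der c) u 0%N) (fun i => iter i (der c) v 0%N) n.
Proof.
elim: n u v => [|n IH] u v; first by rewrite /binconv /= !big_ord1.
rewrite iterSr (eq_iter_der (der_binconv c u v)) iter_derD !IH binconvS.
by congr (_ + _); apply: eq_binconv => i //; rewrite -iterSr.
Qed.

End EgfDerivation.

Lemma sum_stirling2 n (u : nat -> rat) :
  \sum_(k < n.+1) stirling2 n k * u k = iter n (der 1) u 0%N.
Proof.
elim: n u => [|n IH] u; first by rewrite big_ord1 stirling2_00 mul1r.
rewrite iterSr -IH /der big_ord_recl stirling2_S0 mul0r add0r.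
under eq_bigr => k _ do rewrite /bump /= stirling2SS mulrDl.
under [RHS]eq_bigr => k _ do rewrite mul1r mulrDr mulrCA mulrA.
rewrite !big_split /=; congr (_ + _).
transitivity (\sum_(k < n.+2) k%:R * stirling2 n k * u k).
  by rewrite [RHS]big_ord_recl /= ?mulr0n !mul0r add0r.
by rewrite big_ord_recr /= stirling2_small // mulr0 mul0r addr0.
Qed.

Definition sqrt_coef (k : nat) : rat := (-1) ^+ k * dfact (2 * (k%:Z) - 3).

Lemma sqrt_coef0 : sqrt_coef 0 = -1.
Proof. by rewrite /sqrt_coef /= /odf big_nat1 mul1r divr1 expr1. Qed.

Lemma dfact_odd j : dfact (2 * (j.+1%:Z) - 3) = odf j.
Proof.
case: j => [|j]; first by rewrite /= /odf !big_geq // divr1.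
have -> : (2 * (j.+2%:Z) - 3)%R = Posz (j.*2).+1 by rewrite -mul2n; lia.
by rewrite /= doubleK.
Qed.

Lemma sqrt_coefS k : sqrt_coef k.+1 = (1 - 2 * k%:R) * sqrt_coef k.
Proof.
case: k => [|k].
  by rewrite sqrt_coef0 /sqrt_coef dfact_odd /odf big_geq // mulr0 subr0; ring.
rewrite /sqrt_coef !dfact_odd /odf big_nat_recr //= natrM !exprS; ring.
Qed.

Lemma der_sqrt_coef : der 2 sqrt_coef =1 sqrt_coef.
Proof. by move=> k; rewrite /der sqrt_coefS; ring. Qed.

Lemma binconv_sqrt_coef : binconv sqrt_coef sqrt_coef =1 lin_coef 1 2.
Proof.
apply: (@der_eigen_uniq _ 2 2).
- move=> k; rewrite der_binconv (eq_binconv der_sqrt_coef (frefl _)).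
  by rewrite (eq_binconv (frefl _) der_sqrt_coef) mulr_natl mulr2n.
- by case=> [|[|k]]; rewrite /der /= ?mulr0 ?mul0r ?add0r ?mulr1 ?addr0.
by rewrite /binconv big_ord1 sqrt_coef0 bin0 mul1r mulrNN mulr1.
Qed.

Lemma binconv_sqrt_coef_der : binconv sqrt_coef (der 1 sqrt_coef) =1 lin_coef 1 1.
Proof.
move=> k; have twice : 2 * binconv sqrt_coef (der 1 sqrt_coef) k = lin_coef 2 2 k.
  rewrite mulr_natl mulr2n {1}binconvC -der_binconv /der !binconv_sqrt_coef.
  by rewrite -/(der 1 (lin_coef 1 2) k) der_lin_coef mul1r.
by move: twice; case: k => [|[|k]] /=; lra.
Qed.

(* The coefficients of -sqrt(2e^x - 1). *)
Definition sqrt_exp_coef (n : nat) : rat := iter n (der 1) sqrt_coef 0%N.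

Lemma sqrt_exp_coef0 : sqrt_exp_coef 0 = -1.
Proof. exact: sqrt_coef0. Qed.

Lemma sqrt_exp_coef1 : sqrt_exp_coef 1 = -1.
Proof.
by rewrite /sqrt_exp_coef /= /der sqrt_coefS sqrt_coef0 !mulr0 !mul0r add0r subr0 mul1r.
Qed.

Lemma binconv_sqrt_exp_coef n :
  (0 < n)%N -> binconv sqrt_exp_coef sqrt_exp_coef n = 2.
Proof.
case: n => // n _; rewrite -iter_der_binconv (eq_iter_der binconv_sqrt_coef) iterSr.
rewrite (eq_iter_der (der_lin_coef 1 1 2)) iter_der_id // => k.
by rewrite der_lin_coef mul1r.
Qed.

Lemma binconv_sqrt_exp_coefS n :
  binconv sqrt_exp_coef (sqrt_exp_coef \o succn) n = 1.
Proof.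
have shift : sqrt_exp_coef \o succn =1 (fun i => iter i (der 1) (der 1 sqrt_coef) 0%N).
  by move=> i; rewrite /comp /sqrt_exp_coef iterSr.
rewrite (eq_binconv (frefl _) shift) -iter_der_binconv.
rewrite (eq_iter_der binconv_sqrt_coef_der) iter_der_id // => k.
by rewrite der_lin_coef mul1r.
Qed.

Definition sqrt_expN_coef (n : nat) : rat := (-1) ^+ n * sqrt_exp_coef n.

Lemma sqrt_expN_coefM i j :
  sqrt_expN_coef i * sqrt_expN_coef j =
  (-1) ^+ (i + j) * (sqrt_exp_coef i * sqrt_exp_coef j).
Proof. by rewrite /sqrt_expN_coef exprD; ring. Qed.

Lemma sqrt_expN_coefSS m :
  sqrt_expN_coef m.+2 =
    \sum_(i < m) 'C(m.+1, i.+1)%:R * sqrt_expN_coef i.+1 * sqrt_expN_coef (m - i).+1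
  + (\sum_(i < m) 'C(m.+1, i.+1)%:R * sqrt_expN_coef i.+1 * sqrt_expN_coef (m - i)) / 2.
Proof.
have sign_sum (f : nat -> nat) e : (forall i, i < m -> i.+1 + f i = e)%N ->
    \sum_(i < m) 'C(m.+1, i.+1)%:R * sqrt_expN_coef i.+1 * sqrt_expN_coef (f i)
  = (-1) ^+ e * \sum_(i < m) 'C(m.+1, i.+1)%:R * sqrt_exp_coef i.+1 * sqrt_exp_coef (f i).
  move=> sum_e; rewrite mulr_sumr; apply: eq_bigr => i _.
  by rewrite -mulrA sqrt_expN_coefM sum_e //; ring.
rewrite (sign_sum (fun i => (m - i).+1) m.+2) => [|i lt_im]; last by lia.
rewrite (sign_sum (fun i => m - i)%N m.+1) => [|i lt_im]; last by lia.
have square := binconv_sqrt_exp_coef m.+1 isT.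
have product := binconv_sqrt_exp_coefS m.+1.
rewrite binconv_split sqrt_exp_coef0 in square.
rewrite binconv_split /= sqrt_exp_coef0 sqrt_exp_coef1 in product.
have recursion : sqrt_exp_coef m.+2 =
              \sum_(i < m) 'C(m.+1, i.+1)%:R * sqrt_exp_coef i.+1 * sqrt_exp_coef (m - i).+1
            - (\sum_(i < m) 'C(m.+1, i.+1)%:R * sqrt_exp_coef i.+1 * sqrt_exp_coef (m - i)) / 2.
  by lra.
by rewrite /sqrt_expN_coef recursion !exprS; ring.
Qed.

Lemma sqrt_expN_coef_ge0 n : (0 < n)%N -> 0 <= sqrt_expN_coef n.
Proof.
elim/ltn_ind: n => -[|[|m]] // IH _.
  by rewrite /sqrt_expN_coef sqrt_exp_coef1 mulrNN mulr1.
rewrite sqrt_expN_coefSS addr_ge0 ?divr_ge0 ?ler0n //; apply: sumr_ge0 => i _;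
  have lt_im := ltn_ord i; rewrite mulr_ge0 ?(mulr_ge0 (ler0n _ _)) ?IH //; lia.
Qed.

Lemma dE n : d n = sqrt_expN_coef n / n`!%:R.
Proof.
rewrite /d /sqrt_expN_coef /sqrt_exp_coef -sum_stirling2 big_mkord mulrAC.
by do 2 congr (_ * _); apply: eq_bigr => k _; rewrite /sqrt_coef [RHS]mulrCA mulrA.
Qed.

Theorem theorem6p4 (n : nat) : (1 <= n)%N -> 0 <= d n.
Proof. by move=> n_gt0; rewrite dE divr_ge0 ?ler0n ?sqrt_expN_coef_ge0. Qed.
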